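(* If a topological space $X$ has a countable $\mathsf{cs}^\bullet$-network at a point $x\in X$, then $X$ is $(\omega_1,\omega)_p$-equiconvergent at $x$.
   Context: A family $\mathcal N$ of subsets of $X$ is a $\mathsf{cs}^\bullet$-network at $x$ if for every neighborhood $O_x$ of $x$ and every sequence $(x_n)_{n\in\omega}$ converging to $x$ there is $N\in\mathcal N$ with $N\subseteq O_x$ and $x_n\in N$ for some $n$. $X$ is $(\omega_1,\omega)_p$-equiconvergent at $x$ if for every indexed family $\{x_\alpha\}_{\alpha\in\omega_1}$ of sequences in $X^\omega$ converging to $x$ there is a countably infinite $\Lambda\subseteq\omega_1$ such that for every neighborhood $O_x$ of $x$ there is $n\in\omega$ with $\{\alpha\in\Lambda: x_\alpha(n)\notin O_x\}$ finite. *)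

From HB Require Import structures.
From mathcomp Require Import all_boot all_order all_algebra.
From mathcomp Require Import all_classical all_reals all_analysis.
Set Implicit Arguments. Unset Strict Implicit. Unset Printing Implicit Defensive.
Local Open Scope classical_set_scope.

Definition cs_bullet_network_at {X : topologicalType} (NN : set (set X)) (x : X) :=
  forall (O : set X), nbhs x O ->
  forall (s : nat -> X), s @ \oo --> x ->
  exists2 N, NN N & (N `<=` O /\ exists n, N (s n)).

(* (I, lt) is (order-isomorphic to) omega_1, the first uncountable ordinal:
   a strict well-order which is uncountable and all of whose proper initial
   segments are countable. *)
Definition is_omega1 (I : Type) (lt : I -> I -> Prop) :=
  well_founded lt /\
  (forall i j k, lt i j -> lt j k -> lt i k) /\
  (forall i, ~ lt i i) /\
  (forall i j, [\/ lt i j, i = j | lt j i]) /\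
  ~ countable [set: I] /\
  (forall i, countable [set j | lt j i]).

Definition equiconvergent_w1_w_at {X : topologicalType} (x : X) :=
  forall (I : Type) (lt : I -> I -> Prop), is_omega1 lt ->
  forall (s : I -> nat -> X), (forall a, s a @ \oo --> x) ->
  exists L : set I, countable L /\ infinite_set L /\
    (forall O : set X, nbhs x O ->
      exists n : nat, finite_set [set a | L a /\ ~ O (s a n)]).

(** Enumerate the network as [(e k)] and record, for each index [a], the
    hitting pattern [k |-> some n with s a n in e k].  Finite prefixes of these
    patterns take only countably many values, so an uncountable index set has
    some [b] sharing its first [k] pattern values with uncountably many indices,
    for every [k]; choose distinct [a_k] sharing the first [k + 1].  Given a
    neighbourhood [O], some [e k ⊆ O] contains [s b m]; then [s a_j m ∈ e k]
    for every [j >= k], so only [a_0, ..., a_(k-1)] can leave [O] at step [m]. *)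
From HB Require Import structures.
From mathcomp Require Import all_boot all_order all_algebra.
From mathcomp Require Import all_classical all_reals all_analysis.
Set Implicit Arguments. Unset Strict Implicit. Unset Printing Implicit Defensive.
Local Open Scope classical_set_scope.

Lemma sub_cs_bullet_network {X : topologicalType} (NN MM : set (set X)) (x : X) :
  NN `<=` MM -> cs_bullet_network_at NN x -> cs_bullet_network_at MM x.
Proof.
move=> NNMM net O xO s sx; have [N NNN NOs] := net O xO s sx.
by exists N => //; apply: NNMM.
Qed.

Lemma countable_cs_bullet_network_enum {X : topologicalType} (NN : set (set X)) (x : X) :
  countable NN -> cs_bullet_network_at NN x ->
  exists e : nat -> set X, cs_bullet_network_at (range e) x.
Proof.
move=> /pcard_surjP[e NNe] net; exists e.
exact: sub_cs_bullet_network net.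
Qed.

Definition prefix_class (I Y : Type) (h : I -> nat -> Y) (b : I) (k : nat) :=
  [set a | forall i, (i < k)%N -> h a i = h b i].

Lemma prefix_classE (I : Type) (Y : eqType) (h : I -> nat -> Y) b k :
  prefix_class h b k = [set a | map (h a) (iota 0 k) = map (h b) (iota 0 k)].
Proof.
apply/seteqP; split=> a /=.
  by move=> hab; apply/eq_in_map => i; rewrite mem_iota add0n => /andP[_ /hab].
by move=> /eq_in_map hab i ik; apply: hab; rewrite mem_iota ik.
Qed.

Lemma uncountable_prefix_class (I : Type) (Y : countType) (h : I -> nat -> Y) :
  ~ countable [set: I] -> exists b, forall k, ~ countable (prefix_class h b k).
Proof.
move=> unc; apply: contrapT => noB; apply: unc.
pose P (p : nat * seq Y) := [set a | map (h a) (iota 0 p.1) = p.2].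
pose D := [set p | countable (P p)].
apply: sub_countable (bigcup_countable (countableP D) (fun p (Dp : D p) => Dp)).
apply: subset_card_le => b _.
have [k cb] : exists k, countable (prefix_class h b k).
  by apply: contrapT => nk; apply: noB; exists b => k ck; apply: nk; exists k.
by exists (k, map (h b) (iota 0 k)) => //; move: cb; rewrite prefix_classE.
Qed.

Lemma infinite_injective_choice (T : Type) (A : nat -> set T) :
  (forall k, infinite_set (A k)) -> exists a : nat -> T, injective a /\ forall k, A k (a k).
Proof.
elim/Pchoice: T => T in A * => infA.
have fresh k (l : seq T) : {z | A k z /\ z \notin l}.
  apply: cid; have /infinite_setN0[z [Az lz]] := infinite_setD (infA k) (finite_seq l).
  by exists z; split => //; apply/negP.
pose fix prev k := if k is j.+1 then rcons (prev j) (sval (fresh j (prev j))) else [::].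
pose a k := sval (fresh k (prev k)).
have prevE k : prev k = map a (iota 0 k).
  by elim: k => // k IHk; rewrite -[in RHS]addn1 iotaD map_cat -IHk cats1.
have a_fresh j k : (j < k)%N -> a j != a k.
  move=> jk; have := (svalP (fresh k (prev k))).2; rewrite -/(a k) prevE.
  by apply: contra => /eqP <-; apply: map_f; rewrite mem_iota.
exists a; split=> [j k ajk|k]; last exact: (svalP (fresh k (prev k))).1.
by case: (ltngtP j k) => // /a_fresh; rewrite ajk eqxx.
Qed.

Definition some_witness (P : nat -> Prop) : option nat :=
  if pselect (exists n, P n) is left ex then Some (sval (cid ex)) else None.

Lemma some_witnessP (P : nat -> Prop) n : some_witness P = Some n -> P n.
Proof. by rewrite /some_witness; case: pselect => // ex [<-]; exact: svalP. Qed.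

Lemma some_witness_Some (P : nat -> Prop) n : P n -> exists m, some_witness P = Some m.
Proof.
by move=> Pn; rewrite /some_witness; case: pselect => [ex|[]]; [eexists | exists n].
Qed.

Lemma uncountable_equiconvergent (X : topologicalType) (x : X) (e : nat -> set X)
    (I : Type) (s : I -> nat -> X) :
  cs_bullet_network_at (range e) x -> ~ countable [set: I] ->
  (forall a, s a @ \oo --> x) ->
  exists L : set I, countable L /\ infinite_set L /\
    (forall O : set X, nbhs x O ->
      exists n : nat, finite_set [set a | L a /\ ~ O (s a n)]).
Proof.
move=> net unc sx.
pose hit a k := some_witness (fun n => e k (s a n)).
have [b bunc] := uncountable_prefix_class hit unc.
have [a [ainj aC]] : exists a : nat -> I,
    injective a /\ forall k, prefix_class hit b k.+1 (a k).
  apply: (infinite_injective_choice (A := fun k => prefix_class hit b k.+1)).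
  by move=> k /finite_set_countable; apply: bunc.
exists (range a); split; [|split].
- exact: sub_countable (card_image_le a setT) (countableP _).
- by rewrite (eq_finite_set (inj_card_eq (in2W ainj))); exact: infinite_nat.
move=> O xO; have [_ [k _ <-] [ekO [n eksbn]]] := net O xO (s b) (sx b).
have [m hitbk] := @some_witness_Some (fun n => e k (s b n)) n eksbn.
exists m; apply: sub_finite_set (finite_image a (finite_II k)).
move=> _ [[j _ <-] Oaj]; exists j => //=; rewrite ltnNge; apply/negP => kj.
apply/Oaj/ekO/(@some_witnessP (fun n => e k (s (a j) n))).
by rewrite -hitbk; apply: aC; rewrite ltnS.
Qed.

Theorem theorem4p2 (X : topologicalType) (x : X) :
  (exists NN : set (set X), countable NN /\ cs_bullet_network_at NN x) ->
  equiconvergent_w1_w_at x.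
Proof.
move=> [NN [cNN net]] I lt [_ [_ [_ [_ [unc _]]]]] s sx.
have [e nete] := countable_cs_bullet_network_enum cNN net.
exact: uncountable_equiconvergent nete unc sx.
Qed.
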